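(* Assume $\phi_1>\alpha(C_s+C_m)$. There exists $\bar\pi>0$ such that for every $\pi>\bar\pi$, $$\tilde U_M(\mathbf r,\pi)<\tilde U_M(\mathbf r^{id},\pi)\quad\text{for all }\mathbf r\in\mathcal R_e\text{ with }\mathbf r\neq\mathbf r^{id}.$$
   Context: Supply-chain model. The parameters are a price-sensitivity $\alpha\in(0,1]$, a manufacturer's per-unit production cost $C_m\ge 0$, and a supplier's per-unit procurement cost $C_s\ge 0$. For $x\in\mathbb R$ write $x^+=\max\{0,x\}$. The market potential takes values in $\{\phi_1,\dots,\phi_L\}$ with $\phi_1<\phi_2<\dots<\phi_L$, with respective probabilities $\sigma_1,\dots,\sigma_L>0$ summing to $1$. Greedy misreporting policies. $\mathcal R_e$ is the set of $L\times L$ matrices $\mathbf r=(r_{ij})$ such that $r_{ij}\ge0$ for all $i,j$, $r_{ij}=0$ whenever $i<j$, and $\sum_j r_{ij}=1$ for every $i$. Here $r_{ij}$ is the probability of reporting $\phi_j$ when the true potential is $\phi_i$, so a greedy manufacturer only under-reports. $\mathbf r^{id}$ denotes the identity matrix, i.e. truthful reporting. Further notation. Define $$f(\mathbf r)=\sum_{i\ge j}\sigma_i(\phi_i-\phi_j)r_{ij}$$ and $$h_{ij}=\frac{2\phi_i-\phi_j-\alpha(C_m+C_s)}{4\sqrt\alpha}.$$ For a penalty parameter $\pi\ge0$, the manufacturer's limiting utility under misreporting policy $\mathbf r$ and punitive policy $\pi$ is $$\tilde U_M(\mathbf r,\pi)=\sum_{i\ge j}\sigma_i\,r_{ij}\Big(\big[h_{ij}-\pi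 f(\mathbf r)\big]^+\Big)^2 .$$ *)

(* R : realType, indices 'I_L.+1 (phi_1 is phi ord0). *)
From HB Require Import structures.
From mathcomp Require Import all_boot all_order all_algebra.
From mathcomp Require Import reals.
Set Implicit Arguments. Unset Strict Implicit. Unset Printing Implicit Defensive.
Import Order.TTheory GRing.Theory Num.Theory.
Local Open Scope ring_scope.

Section Defs.
Variables (R : realType) (L : nat).

Definition greedy_policy (r : 'M[R]_L.+1) : Prop :=
  [/\ forall i j, 0 <= r i j,
      forall i j : 'I_L.+1, (i < j)%N -> r i j = 0
    & forall i, \sum_j r i j = 1].

Definition f_mis (sigma phi : 'I_L.+1 -> R) (r : 'M[R]_L.+1) : R :=
  \sum_(i < L.+1) \sum_(j < L.+1 | (j <= i)%N) sigma i * (phi i - phi j) * r i j.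

Definition h_coef (alpha Cm Cs : R) (phi : 'I_L.+1 -> R) (i j : 'I_L.+1) : R :=
  (2 * phi i - phi j - alpha * (Cm + Cs)) / (4 * Num.sqrt alpha).

Definition posp (x : R) : R := Num.max 0 x.

Definition U_M (alpha Cm Cs : R) (sigma phi : 'I_L.+1 -> R)
    (r : 'M[R]_L.+1) (pi : R) : R :=
  \sum_(i < L.+1) \sum_(j < L.+1 | (j <= i)%N)
     sigma i * r i j * (posp (h_coef alpha Cm Cs phi i j - pi * f_mis sigma phi r)) ^+ 2.
End Defs.

From HB Require Import structures.
From mathcomp Require Import all_boot all_order all_algebra.
From mathcomp Require Import reals.
From mathcomp Require Import ring lra.
Set Implicit Arguments.
Unset Strict Implicit.
Unset Printing Implicit Defensive.

Import Order.TTheory GRing.Theory Num.Theory.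
Local Open Scope ring_scope.

(* Let x = pi f(r) be the effective penalty, m = min_i h_ii > 0, H = max h_ij
   and d the smallest gap phi_i - phi_j.  A truthful report loses at least
   m min(x, m) against h_ii^2, while a misreport j < i gains at most H^2 but
   contributes at least d to f(r).  Averaging, with c = m min(x, m),
   U_M(r) - U_M(id) <= (H^2 + c) f(r) / d - c.  If x >= H every term of U_M(r)
   vanishes; otherwise f(r) < H / pi, and in both regimes x <= m and x > m the
   bound is negative once pi is large enough. *)

Section PositivePart.
Variable R : realType.
Implicit Types x h m M : R.

Lemma posp_id x : 0 <= x -> posp x = x.
Proof. by move=> x_ge0; apply/max_idPr. Qed.

Lemma posp_eq0 x : x <= 0 -> posp x = 0.
Proof. by move=> x_le0; apply/max_idPl. Qed.

Lemma posp_ge0 x : 0 <= posp x.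
Proof. by rewrite /posp le_max lexx. Qed.

Lemma sqr_posp_le x M : x <= M -> 0 <= M -> posp x ^+ 2 <= M ^+ 2.
Proof.
move=> xM M_ge0; rewrite lerXn2r ?nnegrE ?posp_ge0 //.
by rewrite /posp ge_max xM M_ge0.
Qed.

Lemma sqr_posp_subr_min h m x : 0 < m -> m <= h -> 0 <= x ->
  posp (h - x) ^+ 2 + m * Num.min x m <= h ^+ 2.
Proof.
move=> m_gt0 mh x_ge0; case: (leP x h) => [xh | hx].
  rewrite posp_id ?subr_ge0 //.
  apply: (@le_trans _ _ ((h - x) ^+ 2 + m * x)).
    by rewrite lerD2l ler_pM2l // ge_min lexx.
  (* m x <= (2 h - x) x because 2 h - x >= h >= m *)
  by rewrite !expr2; nra.
rewrite posp_eq0 ?subr_le0 ?(ltW hx) // expr2 mul0r add0r.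
apply: (@le_trans _ _ (m * m)); first by rewrite ler_pM2l // ge_min lexx orbT.
by rewrite expr2; nra.
Qed.

End PositivePart.

Section PenaltyArithmetic.
Variable R : realType.
Implicit Types H m d f p : R.

Lemma penalty_gain_dominates H m d f p : 0 < m -> 0 < d -> 0 <= H -> 0 < f ->
  p * f < H -> (H ^+ 2 + m ^+ 2) * (m + H) < p * (m ^+ 2 * d) ->
  (H ^+ 2 + m * Num.min (p * f) m) / d * f < m * Num.min (p * f) m.
Proof.
move=> m_gt0 d_gt0 H_ge0 f_gt0 pfH p_large.
have K_gt0 : 0 < H ^+ 2 + m ^+ 2 by rewrite ltr_wpDl ?sqr_ge0 ?exprn_gt0.
have p_gt0 : 0 < p.
  by rewrite -(pmulr_lgt0 _ (mulr_gt0 (exprn_gt0 2 m_gt0) d_gt0)); nra.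
rewrite mulrAC ltr_pdivrMr //; case: (leP (p * f) m) => [pfm | mpf].
  have : H ^+ 2 + m * (p * f) < p * m * d.
    rewrite -(ltr_pM2l m_gt0); rewrite !expr2 in p_large K_gt0 *; nra.
  nra.
(* multiply by p: (H^2 + m^2) p f < (H^2 + m^2) H <= p m^2 d *)
rewrite -(ltr_pM2l p_gt0); rewrite !expr2 in p_large K_gt0 *; nra.
Qed.

End PenaltyArithmetic.

Section GreedyPolicy.
Variables (R : realType) (L : nat) (r : 'M[R]_L.+1).
Hypothesis r_greedy : greedy_policy r.

Lemma greedy_row_sum (i : 'I_L.+1) : \sum_(j < L.+1 | (j <= i)%N) r i j = 1.
Proof.
case: r_greedy => _ r_upper r_sum; rewrite big_mkcond -(r_sum i).
by apply: eq_bigr => j _; case: leqP => // /r_upper ->.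
Qed.

Lemma greedy_eq1 : (forall i j : 'I_L.+1, (j < i)%N -> r i j = 0) -> r = 1%:M.
Proof.
case: r_greedy => _ r_upper r_sum r_lower; apply/matrixP => i j; rewrite mxE.
have r_offdiag k : k != j -> r k j = 0.
  by rewrite -val_eqE neq_ltn => /orP[/r_upper | /r_lower].
have [<- | /r_offdiag -> //] := eqVneq i j.
rewrite -(r_sum i) (bigD1 i) //= big1 ?addr0 // => k ki.
case: (ltngtP i k) => [/r_upper | /r_lower | /val_inj ik] //.
by rewrite ik eqxx in ki.
Qed.

End GreedyPolicy.

Section LowerTriangularMean.
Variables (R : realType) (L : nat) (sigma phi : 'I_L.+1 -> R) (r : 'M[R]_L.+1).
Hypothesis r_greedy : greedy_policy r.

Definition tri_mean (g : 'I_L.+1 -> 'I_L.+1 -> R) : R :=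
  \sum_(i < L.+1) \sum_(j < L.+1 | (j <= i)%N) sigma i * r i j * g i j.

Lemma ler_tri_mean (g1 g2 : 'I_L.+1 -> 'I_L.+1 -> R) :
  (forall i, 0 <= sigma i) ->
  (forall i j : 'I_L.+1, (j <= i)%N -> g1 i j <= g2 i j) ->
  tri_mean g1 <= tri_mean g2.
Proof.
case: r_greedy => r_ge0 _ _ sigma_ge0 g12.
apply: ler_sum => i _; apply: ler_sum => j ji.
by rewrite ler_wpM2l ?mulr_ge0 ?g12.
Qed.

Lemma tri_meanD (g1 g2 : 'I_L.+1 -> 'I_L.+1 -> R) :
  tri_mean (fun i j => g1 i j + g2 i j) = tri_mean g1 + tri_mean g2.
Proof.
rewrite -big_split; apply: eq_bigr => i _.
by rewrite -big_split; apply: eq_bigr => j _; rewrite mulrDr.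
Qed.

Lemma tri_mean_row (c : 'I_L.+1 -> R) :
  tri_mean (fun i _ => c i) = \sum_i sigma i * c i.
Proof.
apply: eq_bigr => i _.
by rewrite -big_distrl -mulr_sumr /= greedy_row_sum // mulr1.
Qed.

Lemma tri_mean_gap (a : R) :
  tri_mean (fun i j => a * (phi i - phi j)) = a * f_mis sigma phi r.
Proof.
rewrite /f_mis mulr_sumr; apply: eq_bigr => i _.
by rewrite mulr_sumr; apply: eq_bigr => j _; ring.
Qed.

Lemma tri_mean_affine (c : 'I_L.+1 -> R) (a b : R) :
  \sum_i sigma i = 1 ->
  tri_mean (fun i j => c i + a * (phi i - phi j) - b) =
  \sum_i sigma i * c i + a * f_mis sigma phi r - b.
Proof.
move=> sigma_sum1.
rewrite (tri_meanD (fun i j => c i + a * (phi i - phi j)) (fun _ _ => - b)).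
rewrite tri_meanD tri_mean_row tri_mean_gap.
by rewrite (tri_mean_row (fun _ => - b)) -mulr_suml sigma_sum1 mul1r.
Qed.

End LowerTriangularMean.

Section Misreporting.
Variables (R : realType) (L : nat) (sigma phi : 'I_L.+1 -> R).

Lemma f_mis_id : f_mis sigma phi 1%:M = 0.
Proof.
rewrite /f_mis big1 // => i _; rewrite big1 // => j _; rewrite mxE.
by have [->|_] := eqVneq i j; rewrite ?subrr mulr0 ?mul0r // mulr0n mulr0.
Qed.

Lemma U_M_id alpha Cm Cs pi :
  U_M alpha Cm Cs sigma phi 1%:M pi =
  \sum_i sigma i * posp (h_coef alpha Cm Cs phi i i) ^+ 2.
Proof.
rewrite /U_M f_mis_id mulr0; apply: eq_bigr => i _.
rewrite (bigD1 i) //= big1 ?addr0 => [|j /andP[_ ji]].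
  by rewrite mxE eqxx mulr1 subr0.
by rewrite mxE eq_sym (negbTE ji) mulr0 mul0r.
Qed.

Hypothesis phi_incr : forall i j : 'I_L.+1, (i < j)%N -> phi i < phi j.
Hypothesis sigma_gt0 : forall i, 0 < sigma i.

Lemma f_mis_gt0 (r : 'M[R]_L.+1) :
  greedy_policy r -> r <> 1%:M -> 0 < f_mis sigma phi r.
Proof.
move=> r_greedy r_neq1; have [r_ge0 _ _] := r_greedy.
have term_ge0 (i j : 'I_L.+1) :
    (j <= i)%N -> 0 <= sigma i * (phi i - phi j) * r i j.
  rewrite leq_eqVlt => /orP[/eqP/val_inj -> | /phi_incr ji].
    by rewrite subrr mulr0 mul0r.
  by rewrite !mulr_ge0 ?r_ge0 ?(ltW (sigma_gt0 i)) // subr_ge0 ltW.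
have f_ge0 : 0 <= f_mis sigma phi r.
  by apply: sumr_ge0 => i _; apply: sumr_ge0 => j; apply: term_ge0.
rewrite lt_def f_ge0 andbT; apply/eqP => f0; apply/r_neq1/greedy_eq1 => // i j ji.
have row0 := psumr_eq0P (fun i _ => sumr_ge0 _ (term_ge0 i)) f0.
move: (@psumr_eq0P _ _ _ _ (term_ge0 i) (row0 i isT) j (ltnW ji)) => /eqP.
rewrite !mulf_eq0 subr_eq0 (gt_eqF (sigma_gt0 i)) (gt_eqF (phi_incr ji)).
by move=> /eqP.
Qed.

End Misreporting.

Section LargePenalty.
Variables (R : realType) (L : nat) (alpha Cm Cs : R) (phi sigma : 'I_L.+1 -> R).
Hypothesis alpha_gt0 : 0 < alpha.
Hypothesis phi_incr : forall i j : 'I_L.+1, (i < j)%N -> phi i < phi j.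
Hypothesis sigma_gt0 : forall i, 0 < sigma i.
Hypothesis sigma_sum1 : \sum_i sigma i = 1.
Hypothesis phi0_gt : alpha * (Cs + Cm) < phi ord0.

Local Notation h := (h_coef alpha Cm Cs phi).
Local Notation U := (U_M alpha Cm Cs sigma phi).

Lemma phi_le {i j : 'I_L.+1} : (j <= i)%N -> phi j <= phi i.
Proof. by rewrite leq_eqVlt => /orP[/eqP/val_inj -> // | /phi_incr/ltW]. Qed.

Lemma h_coef_le (i j i' j' : 'I_L.+1) :
  2 * phi i - phi j <= 2 * phi i' - phi j' -> h i j <= h i' j'.
Proof.
by move=> le_ij; rewrite ler_wpM2r ?invr_ge0 ?mulr_ge0 ?sqrtr_ge0 // lerD2r.
Qed.

Let m := h ord0 ord0.
Let H := h ord_max ord0.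

Lemma h_diag_min_gt0 : 0 < m.
Proof.
by rewrite divr_gt0 ?mulr_gt0 ?sqrtr_gt0 //; move: phi0_gt; rewrite addrC; lra.
Qed.

Lemma h_diag_ge i : m <= h i i.
Proof. by apply: h_coef_le; have := @phi_le i ord0 (leq0n i); lra. Qed.

Lemma h_le_max i j : h i j <= H.
Proof.
apply: h_coef_le; have := @phi_le j ord0 (leq0n j).
by have := @phi_le ord_max i (leq_ord i); lra.
Qed.

Definition gap_min : R :=
  \big[Num.min/1]_(p : 'I_L.+1 * 'I_L.+1 | (p.2 < p.1)%N) (phi p.1 - phi p.2).

Lemma gap_min_gt0 : 0 < gap_min.
Proof.
by apply/bigmin_gtP; split=> // -[i j] /= /phi_incr; rewrite subr_gt0.
Qed.

Lemma gap_min_le (i j : 'I_L.+1) : (j < i)%N -> gap_min <= phi i - phi j.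
Proof. by move=> ji; apply: (@bigmin_le_cond _ _ _ 1 (i, j)). Qed.

Definition penalty_threshold : R :=
  (H ^+ 2 + m ^+ 2) * (m + H) / (m ^+ 2 * gap_min).

Lemma penalty_threshold_gt0 : 0 < penalty_threshold.
Proof.
have m_gt0 := h_diag_min_gt0; have m_le_H : m <= H := h_le_max ord0 ord0.
have m2_gt0 : 0 < m ^+ 2 by rewrite exprn_gt0.
apply: divr_gt0; apply: mulr_gt0; rewrite ?gap_min_gt0 //; last lra.
by rewrite ltr_wpDl ?sqr_ge0.
Qed.

(* the form [U_M_le_affine] expects, with slope 0 *)
Lemma sqr_posp_h_saturated x (i j : 'I_L.+1) : H <= x ->
  posp (h i j - x) ^+ 2 <= posp (h i i) ^+ 2 + 0 * (phi i - phi j) - m ^+ 2.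
Proof.
move=> Hx; have m_gt0 := h_diag_min_gt0; have m_le := h_diag_ge i.
have h_le := h_le_max i j.
rewrite [posp (h i i)]posp_id; last lra.
rewrite posp_eq0; last lra.
by rewrite mul0r addr0 !expr2 mul0r; nra.
Qed.

Lemma sqr_posp_h_le x (i j : 'I_L.+1) : 0 <= x -> (j <= i)%N ->
  posp (h i j - x) ^+ 2 <=
  posp (h i i) ^+ 2 + (H ^+ 2 + m * Num.min x m) / gap_min * (phi i - phi j)
    - m * Num.min x m.
Proof.
move=> x_ge0 ji; set c := m * Num.min x m.
have m_gt0 := h_diag_min_gt0; have m_le := h_diag_ge i.
have c_ge0 : 0 <= c by rewrite mulr_ge0 ?(ltW m_gt0) // le_min x_ge0 ltW.
rewrite [posp (h i i)]posp_id; last lra.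
case: (ltngtP j i) ji => [ji _ | // | /val_inj -> _].
  have H_ge0 : 0 <= H by have : m <= H := h_le_max ord0 ord0; lra.
  have sqr_le : posp (h i j - x) ^+ 2 <= H ^+ 2.
    by apply: sqr_posp_le => //; have := h_le_max i j; lra.
  have gap_gain : H ^+ 2 + c <= (H ^+ 2 + c) / gap_min * (phi i - phi j).
    rewrite mulrAC ler_pdivlMr ?gap_min_gt0 // ler_wpM2l ?gap_min_le //.
    by rewrite addr_ge0 ?sqr_ge0.
  have c_le : c <= h i i ^+ 2.
    apply: (@le_trans _ _ (m * m)); first by rewrite ler_pM2l // ge_min lexx orbT.
    by rewrite expr2; nra.
  lra.
have := sqr_posp_subr_min m_gt0 m_le x_ge0.
by rewrite -/c subrr mulr0 addr0; lra.
Qed.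

Section FixedPolicy.
Variable r : 'M[R]_L.+1.
Hypothesis r_greedy : greedy_policy r.

Lemma U_M_le_affine pi (a c : R) :
  (forall i j : 'I_L.+1, (j <= i)%N ->
     posp (h i j - pi * f_mis sigma phi r) ^+ 2 <=
     posp (h i i) ^+ 2 + a * (phi i - phi j) - c) ->
  U r pi <= U 1%:M pi + a * f_mis sigma phi r - c.
Proof.
move=> bound; rewrite U_M_id -tri_mean_affine //.
by apply: ler_tri_mean => // i; apply: ltW.
Qed.

Lemma U_M_truthful_lt pi :
  penalty_threshold < pi -> r <> 1%:M -> U r pi < U 1%:M pi.
Proof.
move=> pi_large r_neq1; have m_gt0 := h_diag_min_gt0.
have f_gt0 := f_mis_gt0 phi_incr sigma_gt0 r_greedy r_neq1.
have pi_gt0 : 0 < pi := lt_trans penalty_threshold_gt0 pi_large.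
have x_ge0 : 0 <= pi * f_mis sigma phi r by rewrite mulr_ge0 ?ltW.
case: (leP H (pi * f_mis sigma phi r)) => [Hx | xH].
  apply: le_lt_trans (U_M_le_affine (fun i j _ => sqr_posp_h_saturated i j Hx)) _.
  by rewrite mul0r addr0 ltrBlDr ltrDl exprn_gt0.
apply: le_lt_trans (U_M_le_affine (fun _ _ => sqr_posp_h_le x_ge0)) _.
have H_ge0 : 0 <= H by have : m <= H := h_le_max ord0 ord0; lra.
have p_large : (H ^+ 2 + m ^+ 2) * (m + H) < pi * (m ^+ 2 * gap_min).
  have z_gt0 : 0 < m ^+ 2 * gap_min by rewrite mulr_gt0 ?exprn_gt0 ?gap_min_gt0.
  by rewrite -ltr_pdivrMr.
have := penalty_gain_dominates m_gt0 gap_min_gt0 H_ge0 f_gt0 xH p_large.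
lra.
Qed.

End FixedPolicy.
End LargePenalty.

Theorem theorem1 (R : realType) (L : nat) (alpha Cm Cs : R)
    (phi sigma : 'I_L.+1 -> R) :
  0 < alpha -> alpha <= 1 -> 0 <= Cm -> 0 <= Cs ->
  (forall i j : 'I_L.+1, (i < j)%N -> phi i < phi j) ->
  (forall i, 0 < sigma i) -> \sum_i sigma i = 1 ->
  alpha * (Cs + Cm) < phi ord0 ->
  exists pibar : R, 0 < pibar /\
    forall pi : R, pibar < pi ->
    forall r : 'M[R]_L.+1, greedy_policy r -> r <> 1%:M ->
      U_M alpha Cm Cs sigma phi r pi < U_M alpha Cm Cs sigma phi 1%:M pi.
Proof.
move=> alpha_gt0 _ _ _ phi_incr sigma_gt0 sigma_sum1 phi0_gt.
exists (penalty_threshold alpha Cm Cs phi); split.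
  exact: penalty_threshold_gt0.
move=> pi pi_large r r_greedy.
exact: U_M_truthful_lt.
Qed.
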